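(* Let $m,n\ge 1$, let $0\le\theta\le 1$, let $0<p<1$, let $\lambda>0$, and let $\mathbf{Y}\in\mathbb{R}^{m\times n}$ have full singular value decomposition $\mathbf{Y}=\mathbf{U}\mathbf{\Sigma}\mathbf{V}^\mathsf{T}$ with $\mathbf{\Sigma}=\mathrm{diag}(\sigma_1,\sigma_2,\ldots,\sigma_{\min\{m,n\}})$, $\sigma_1\ge\sigma_2\ge\cdots\ge\sigma_{\min\{m,n\}}\ge 0$. Put $r=\lceil\theta\cdot\min\{m,n\}\rceil$. Then the optimal solution of $$\min_{\mathbf{M}\in\mathbb{R}^{m\times n}}\ \lambda\Vert\mathbf{M}\Vert_{\theta,S_p}^p+\frac{1}{2}\Vert\mathbf{M}-\mathbf{Y}\Vert_F^2$$ is given by $\mathbf{M}_{opt}=\mathbf{U}\mathbf{\Delta}\mathbf{V}^\mathsf{T}$, where $\mathbf{\Delta}=\mathrm{diag}(\sigma_1,\ldots,\sigma_r,\delta_{r+1},\ldots,\delta_{\min\{m,n\}})$ is arranged in the same (non-ascending) order as $\mathbf{\Sigma}$, and the diagonal entries $\delta_i$ ($i>r$) are given by the problem $$\min_{\delta_i\ge 0}\ \sum_{i=r+1}^{\min\{m,n\}}\Big(\lambda\delta_i^p+\tfrac{1}{2}(\delta_i-\sigma_i)^2\Big)\quad\text{s.t. } \delta_i\ge\delta_j \text{ for } i\le j,\ i,j\in\{r+1,\ldots,\min\{m,n\}\}.$$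
   Context: For a matrix $\mathbf{M}\in\mathbb{R}^{m\times n}$ with singular values $\sigma_1(\mathbf{M})\ge\cdots\ge\sigma_{\min\{m,n\}}(\mathbf{M})\ge0$, a truncation rate $\theta\in[0,1]$ and $r=\lceil\theta\cdot\min\{m,n\}\rceil$ (smallest integer not less than $\theta\min\{m,n\}$), the $p$-th power of the truncated Schatten $p$-norm is $\Vert\mathbf{M}\Vert_{\theta,S_p}^p=\sum_{i=r+1}^{\min\{m,n\}}\sigma_i(\mathbf{M})^p$, i.e. only the smallest $\min\{m,n\}-r$ singular values contribute. $\Vert\cdot\Vert_F$ is the Frobenius norm. *)

From HB Require Import structures.
From mathcomp Require Import all_boot all_order all_algebra.
From mathcomp Require Import reals exp.
Set Implicit Arguments. Unset Strict Implicit. Unset Printing Implicit Defensive.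
Import Order.TTheory GRing.Theory Num.Theory.
Local Open Scope ring_scope.

Section Defs.
Variable R : realType.

Definition rdiag (m n : nat) (d : nat -> R) : 'M[R]_(m, n) :=
  \matrix_(i < m, j < n) (if (i : nat) == (j : nat) then d i else 0).

Definition orthomx (k : nat) (U : 'M[R]_k) : Prop := U^T *m U = 1%:M.

Definition is_svd (m n : nat) (Y : 'M[R]_(m, n)) (U : 'M[R]_m) (s : nat -> R)
    (V : 'M[R]_n) : Prop :=
  [/\ orthomx U, orthomx V, Y = U *m rdiag m n s *m V^T,
      (forall i, (i < minn m n)%N -> 0 <= s i) &
      (forall i j, (i <= j)%N -> (j < minn m n)%N -> s j <= s i)].

Definition is_singvals (m n : nat) (M : 'M[R]_(m, n)) (s : nat -> R) : Prop :=
  exists U V, is_svd M U s V.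

Definition trunc_rank (theta : R) (m n : nat) : nat :=
  `|Num.ceil (theta * (minn m n)%:R)|%N.

(* p-th power of the truncated Schatten p-norm, computed from the singular
   values s of M: sum of s_i^p over 0-based indices r <= i < min(m,n) *)
Definition trunc_schatten_pow (theta p : R) (m n : nat) (s : nat -> R) : R :=
  \sum_(trunc_rank theta m n <= i < minn m n) powR (s i) p.

Definition frob2 (m n : nat) (A : 'M[R]_(m, n)) : R :=
  \sum_(i < m) \sum_(j < n) (A i j) ^+ 2.

(* objective value lambda ||M||_{theta,S_p}^p + 1/2 ||M - Y||_F^2, where s are
   the singular values of M *)
Definition objective (theta p lambda : R) (m n : nat) (Y M : 'M[R]_(m, n))
    (s : nat -> R) : R :=
  lambda * trunc_schatten_pow theta p m n s + 2^-1 * frob2 (M - Y).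

Definition delta_obj (lambda p : R) (r k : nat) (sigma d : nat -> R) : R :=
  \sum_(r <= i < k) (lambda * powR (d i) p + 2^-1 * (d i - sigma i) ^+ 2).

Definition delta_feasible (r k : nat) (d : nat -> R) : Prop :=
  (forall i, (r <= i)%N -> (i < k)%N -> 0 <= d i) /\
  (forall i j, (r <= i)%N -> (i <= j)%N -> (j < k)%N -> d j <= d i).

End Defs.

From Pilot Require Import Defs.
From HB Require Import structures.
From mathcomp Require Import all_boot all_order all_algebra.
From mathcomp Require Import reals exp.
From mathcomp Require Import ring lra.
Set Implicit Arguments. Unset Strict Implicit. Unset Printing Implicit Defensive.
Import Order.TTheory GRing.Theory Num.Theory.
Local Open Scope ring_scope.

(* Von Neumann's trace inequality drives both halves of the argument.  For
   M = U1 diag(a) V1^T and Y = U2 diag(b) V2^T, the Frobenius product <M, Y>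
   equals sum_(i,j) a_i b_j P_ij Q_ji with P = U1^T U2 and Q = V2^T V1
   orthogonal, so the weights |P_ij Q_ji| form a doubly substochastic matrix
   (by AM-GM on rows and columns of P and Q).  Writing nonincreasing a and b
   as nonnegative combinations of indicators of initial segments [0, s]
   reduces <M, Y> <= sum_i a_i b_i to the fact that such a matrix carries
   mass at most min(s, t) + 1 on a block [0, s] x [0, t].

   Consequently ||M - Y||_F^2 >= sum_i (s_i - sigma_i)^2 when s are the
   singular values of M, so the objective at M dominates the delta-objective
   at s, hence at its minimiser delta.  Conversely the optimal delta starts
   below sigma_r (clipping it at sigma_r lowers each term, since
   x |-> lambda x^p + (x - sigma_i)^2 / 2 increases on [sigma_i, +oo)), so
   Delta is nonincreasing and, by the equality case of the trace inequality,
   it is the singular value sequence of M_opt; and M_opt - Y is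
   U diag(Delta - sigma) V^T, whose first r diagonal entries vanish, so the
   objective at M_opt is exactly the delta-objective at delta. *)

Section Rearrangement.
Variable R : realDomainType.

Definition nonneg_on (k : nat) (a : nat -> R) := forall i, (i < k)%N -> 0 <= a i.

Definition nonincreasing_on (k : nat) (a : nat -> R) :=
  forall i j, (i <= j)%N -> (j < k)%N -> a j <= a i.

Definition abs_dsubstochastic (k : nat) (w : nat -> nat -> R) :=
  (forall i, (i < k)%N -> \sum_(0 <= j < k) `|w i j| <= 1) /\
  (forall j, (j < k)%N -> \sum_(0 <= i < k) `|w i j| <= 1).

Lemma sum_nat_delta (k i : nat) (F : nat -> R) :
  (i < k)%N -> \sum_(0 <= j < k) F j * (j == i)%:R = F i.
Proof.
move=> ltik; under eq_bigr do rewrite mulr_natr mulrb.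
by rewrite -big_mkcond big_nat1_eq ltik.
Qed.

Lemma nonincreasing_step_decomp (k : nat) (a : nat -> R) :
  nonneg_on k a -> nonincreasing_on k a ->
  exists2 c : nat -> R, nonneg_on k c &
    forall i, (i < k)%N -> a i = \sum_(0 <= s < k) c s * (i <= s)%:R.
Proof.
move=> a_ge0 a_decr.
pose a' s := if (s < k)%N then a s else 0.
exists (fun s => a' s - a' s.+1).
  move=> s lt_sk; rewrite subr_ge0 /a' lt_sk.
  by case: ifP => [/(a_decr _ _ (leqnSn s))|_]; last exact: a_ge0.
move=> i lt_ik; rewrite (big_cat_nat (leq0n i) (ltnW lt_ik)) /= big_nat_cond big1.
  rewrite add0r (eq_big_nat _ _ (F2 := fun s => - a' s.+1 - - a' s)).
    by rewrite telescope_sumr 1?ltnW // /a' ltnn lt_ik opprK oppr0 add0r.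
  by move=> s /andP[le_is _]; rewrite le_is mulr1 opprK addrC.
by move=> s /andP[/andP[_ lt_si] _]; rewrite leqNgt lt_si mulr0.
Qed.

Lemma sum_bilinear_expand (k : nat) (c d : nat -> R) (I W : nat -> nat -> R) :
  \sum_(0 <= i < k) \sum_(0 <= j < k)
     (\sum_(0 <= s < k) c s * I i s) * (\sum_(0 <= t < k) d t * I j t) * W i j
  = \sum_(0 <= s < k) \sum_(0 <= t < k) c s * d t *
      \sum_(0 <= i < k) \sum_(0 <= j < k) I i s * I j t * W i j.
Proof.
transitivity (\sum_(0 <= i < k) \sum_(0 <= j < k) \sum_(0 <= s < k)
   \sum_(0 <= t < k) c s * d t * (I i s * I j t * W i j)).
  apply: eq_bigr => i _; apply: eq_bigr => j _.
  rewrite !mulr_suml; apply: eq_bigr => s _.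
  rewrite mulr_sumr mulr_suml; apply: eq_bigr => t _; ring.
under eq_bigr do rewrite exchange_big_nat.
rewrite exchange_big_nat; apply: eq_bigr => s _.
under eq_bigr do rewrite exchange_big_nat.
rewrite exchange_big_nat; apply: eq_bigr => t _.
by rewrite mulr_sumr; apply: eq_bigr => i _; rewrite mulr_sumr.
Qed.

Lemma abs_dsubstochastic_block (k s t : nat) (w : nat -> nat -> R) :
  abs_dsubstochastic k w ->
  \sum_(0 <= i < k) \sum_(0 <= j < k) (i <= s)%:R * (j <= t)%:R * `|w i j|
  <= \sum_(0 <= i < k) \sum_(0 <= j < k) (i <= s)%:R * (j <= t)%:R * (i == j)%:R.
Proof.
wlog le_st : s t w / (s <= t)%N => [wlog_st w_sub|[w_row _]].
  have [le_st|/ltnW le_ts] := leqP s t; first exact: wlog_st.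
  have w_subT : abs_dsubstochastic k (fun i j => w j i) by case: w_sub.
  rewrite exchange_big_nat [in X in _ <= X]exchange_big_nat.
  under eq_bigr do under eq_bigr do rewrite [_%:R * _%:R]mulrC.
  under [X in _ <= X]eq_bigr do under eq_bigr do rewrite [_%:R * _%:R]mulrC eq_sym.
  exact: wlog_st.
have -> : \sum_(0 <= i < k) \sum_(0 <= j < k) (i <= s)%:R * (j <= t)%:R * (i == j)%:R
    = \sum_(0 <= i < k) (i <= s)%:R :> R.
  apply: eq_big_nat => i /andP[_ lt_ik].
  under eq_bigr do rewrite eq_sym; rewrite sum_nat_delta //.
  by have [le_is|] := leqP i s; rewrite ?(leq_trans le_is le_st) ?mulr1 ?mul0r.
apply: ler_sum_nat => i /andP[_ lt_ik].
under eq_bigr do rewrite -mulrA.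
rewrite -mulr_sumr ler_piMr ?ler0n //; apply: le_trans (w_row i lt_ik).
by apply: ler_sum => j _; rewrite ler_piMl ?normr_ge0 // lern1 leq_b1.
Qed.

Lemma rearrangement_le (k : nat) (a b : nat -> R) (w : nat -> nat -> R) :
  nonneg_on k a -> nonincreasing_on k a ->
  nonneg_on k b -> nonincreasing_on k b -> abs_dsubstochastic k w ->
  \sum_(0 <= i < k) \sum_(0 <= j < k) a i * b j * w i j
  <= \sum_(0 <= i < k) a i * b i.
Proof.
move=> a_ge0 a_decr b_ge0 b_decr w_sub.
have [c c_ge0 a_comb] := nonincreasing_step_decomp a_ge0 a_decr.
have [d d_ge0 b_comb] := nonincreasing_step_decomp b_ge0 b_decr.
have combE W : \sum_(0 <= i < k) \sum_(0 <= j < k) a i * b j * W i j =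
    \sum_(0 <= s < k) \sum_(0 <= t < k) c s * d t *
      \sum_(0 <= i < k) \sum_(0 <= j < k) (i <= s)%:R * (j <= t)%:R * W i j.
  rewrite -sum_bilinear_expand; apply: eq_big_nat => i /andP[_ lt_ik].
  by apply: eq_big_nat => j /andP[_ lt_jk]; rewrite -a_comb // -b_comb.
have -> : \sum_(0 <= i < k) a i * b i =
    \sum_(0 <= i < k) \sum_(0 <= j < k) a i * b j * (i == j)%:R.
  apply: eq_big_nat => i /andP[_ lt_ik].
  by under eq_bigr do rewrite -mulrA eq_sym; rewrite -mulr_sumr sum_nat_delta.
apply: (@le_trans _ _ (\sum_(0 <= i < k) \sum_(0 <= j < k) a i * b j * `|w i j|)).
  apply: ler_sum_nat => i /andP[_ lt_ik]; apply: ler_sum_nat => j /andP[_ lt_jk].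
  by rewrite ler_wpM2l ?ler_norm ?mulr_ge0 ?a_ge0 ?b_ge0.
rewrite !combE; apply: ler_sum_nat => s /andP[_ lt_sk].
apply: ler_sum_nat => t /andP[_ lt_tk].
by rewrite ler_wpM2l ?mulr_ge0 ?c_ge0 ?d_ge0 ?abs_dsubstochastic_block.
Qed.

End Rearrangement.

Lemma sum_abs_mul_le1 (R : realFieldType) (k : nat) (F G : nat -> R) :
  \sum_(0 <= j < k) F j ^+ 2 <= 1 -> \sum_(0 <= j < k) G j ^+ 2 <= 1 ->
  \sum_(0 <= j < k) `|F j * G j| <= 1.
Proof.
move=> F_le1 G_le1.
have amgm j : `|F j * G j| <= (F j ^+ 2 + G j ^+ 2) / 2.
  rewrite normrM -(real_normK (num_real (F j))) -(real_normK (num_real (G j))).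
  by have [] := leif_mean_square `|F j| `|G j|.
apply: le_trans (ler_sum_nat (fun j _ => amgm j)) _.
rewrite -mulr_suml big_split /=; lra.
Qed.

Lemma sum_sqr_prefix_le (R : realDomainType) (k' k : nat) (F : nat -> R) :
  (k' <= k)%N -> \sum_(0 <= j < k') F j ^+ 2 <= \sum_(0 <= j < k) F j ^+ 2.
Proof.
move=> le_k'k; rewrite (big_cat_nat (leq0n k') le_k'k) /= lerDl.
by apply: sumr_ge0 => j _; apply: sqr_ge0.
Qed.

Lemma sum_nat_minn (R : nmodType) (m n : nat) (F : nat -> R) :
  (forall i, (m <= i)%N -> F i = 0) ->
  \sum_(0 <= i < n) F i = \sum_(0 <= i < minn m n) F i.
Proof.
move=> F0; have [le_mn|//] := leqP m n.
rewrite (big_cat_nat (leq0n m) le_mn) /= [X in _ + X]big_nat_cond.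
by rewrite [X in _ + X]big1 ?addr0 // => i /andP[/andP[/F0]].
Qed.

Section SvdInnerProduct.
Variable R : realType.

(* Entries of [A] indexed by naturals, with junk value [0] outside the
   [m x n] range. *)
Definition nat_entry (m n : nat) (A : 'M[R]_(m, n)) (i j : nat) : R :=
  match insub i, insub j with Some i', Some j' => A i' j' | _, _ => 0 end.

Lemma nat_entryE (m n : nat) (A : 'M[R]_(m, n)) (i j : nat)
    (lt_im : (i < m)%N) (lt_jn : (j < n)%N) :
  nat_entry A i j = A (Ordinal lt_im) (Ordinal lt_jn).
Proof.
by rewrite /nat_entry (insubT (fun i => i < m)%N lt_im) (insubT (fun j => j < n)%N lt_jn).
Qed.

Lemma nat_entry_ord (m n : nat) (A : 'M[R]_(m, n)) (i : 'I_m) (j : 'I_n) :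
  nat_entry A i j = A i j.
Proof. by rewrite /nat_entry !valK. Qed.

Lemma nat_entry1 (k i j : nat) :
  (i < k)%N -> (j < k)%N -> nat_entry (1%:M : 'M[R]_k) i j = (i == j)%:R.
Proof. by move=> lt_ik lt_jk; rewrite (nat_entryE _ lt_ik lt_jk) mxE. Qed.

Lemma nat_entry_out_row (m n : nat) (A : 'M[R]_(m, n)) (i j : nat) :
  (m <= i)%N -> nat_entry A i j = 0.
Proof. by move=> le_mi; rewrite /nat_entry insubF // ltnNge le_mi. Qed.

Lemma nat_entry_out_col (m n : nat) (A : 'M[R]_(m, n)) (i j : nat) :
  (n <= j)%N -> nat_entry A i j = 0.
Proof.
by move=> le_nj; rewrite /nat_entry [insub j]insubF ?ltnNge ?le_nj //; case: insub.
Qed.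

Definition frob_dot (m n : nat) (A B : 'M[R]_(m, n)) : R :=
  \sum_(i < m) \sum_(j < n) A i j * B i j.

Lemma frob_dotE (m n : nat) (A B : 'M[R]_(m, n)) : frob_dot A B = \tr (A^T *m B).
Proof.
rewrite /frob_dot /mxtrace exchange_big; apply: eq_bigr => j _; rewrite mxE.
by apply: eq_bigr => i _; rewrite mxE.
Qed.

Lemma frob2_dot (m n : nat) (A : 'M[R]_(m, n)) : frob2 A = frob_dot A A.
Proof. by apply: eq_bigr => i _; apply: eq_bigr => j _; rewrite expr2. Qed.

Lemma frob2B (m n : nat) (A B : 'M[R]_(m, n)) :
  frob2 (A - B) = frob2 A + frob2 B - 2 * frob_dot A B.
Proof.
rewrite /frob2 /frob_dot -big_split /= mulr_sumr -sumrB; apply: eq_bigr => i _.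
rewrite -big_split /= mulr_sumr -sumrB; apply: eq_bigr => j _.
rewrite !mxE; ring.
Qed.

Lemma orthomx_trmx (k : nat) (U : 'M[R]_k) : Defs.orthomx U -> Defs.orthomx U^T.
Proof. by rewrite /Defs.orthomx trmxK => /mulmx1C. Qed.

Lemma orthomx_trmx_mul (k : nat) (A B : 'M[R]_k) :
  Defs.orthomx A -> Defs.orthomx B -> Defs.orthomx (A^T *m B).
Proof.
move=> oA oB; rewrite /Defs.orthomx trmx_mul trmxK mulmxA -(mulmxA B^T).
by rewrite (mulmx1C oA) mulmx1.
Qed.

Lemma orthomx_col_sqr (k : nat) (U : 'M[R]_k) (j : nat) :
  Defs.orthomx U -> (j < k)%N -> \sum_(0 <= i < k) nat_entry U i j ^+ 2 = 1.
Proof.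
move=> oU lt_jk; have := congr1 (fun M : 'M[R]_k => M (Ordinal lt_jk) (Ordinal lt_jk)) oU.
rewrite /= !mxE eqxx big_mkord => h; apply: etrans h; apply: eq_bigr => i _.
rewrite mxE (nat_entryE _ (ltn_ord i) lt_jk) expr2.
by congr (U _ _ * U _ _); apply: val_inj.
Qed.

Lemma orthomx_row_sqr (k : nat) (U : 'M[R]_k) (i : nat) :
  Defs.orthomx U -> (i < k)%N -> \sum_(0 <= j < k) nat_entry U i j ^+ 2 = 1.
Proof.
move=> /orthomx_trmx oUT lt_ik; rewrite -(orthomx_col_sqr oUT lt_ik).
apply: eq_big_nat => j /andP[_ lt_jk].
by rewrite !(nat_entryE _ lt_ik lt_jk, nat_entryE _ lt_jk lt_ik) mxE.
Qed.

Lemma orthomx_row_sqr_le (k k' : nat) (U : 'M[R]_k) (i : nat) :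
  Defs.orthomx U -> (i < k)%N -> (k' <= k)%N ->
  \sum_(0 <= j < k') nat_entry U i j ^+ 2 <= 1.
Proof.
by move=> oU lt_ik le_k'k; rewrite -(orthomx_row_sqr oU lt_ik) sum_sqr_prefix_le.
Qed.

Lemma orthomx_col_sqr_le (k k' : nat) (U : 'M[R]_k) (j : nat) :
  Defs.orthomx U -> (j < k)%N -> (k' <= k)%N ->
  \sum_(0 <= i < k') nat_entry U i j ^+ 2 <= 1.
Proof.
by move=> oU lt_jk le_k'k; rewrite -(orthomx_col_sqr oU lt_jk) sum_sqr_prefix_le.
Qed.

Lemma rdiagB (m n : nat) (a b : nat -> R) :
  rdiag m n a - rdiag m n b = rdiag m n (fun i => a i - b i).
Proof. by apply/matrixP => i j; rewrite !mxE; case: eqP; rewrite ?subr0. Qed.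

Lemma rdiag_tr_mul (m n : nat) (a : nat -> R) (P : 'M[R]_m) :
  (rdiag m n a)^T *m P = \matrix_(i < n, l < m) (a i * nat_entry P i l).
Proof.
apply/matrixP => i l; rewrite !mxE.
under eq_bigr => j _ do rewrite !mxE (fun_if (fun x => x * P j l)) mul0r -nat_entry_ord.
rewrite -big_mkcond (big_ord1_eq _ (fun j => a j * nat_entry P j l)).
by case: ltnP => // le_mi; rewrite nat_entry_out_row ?mulr0.
Qed.

Lemma rdiag_tr_mul_mul (m n : nat) (a b : nat -> R) (P : 'M[R]_m) :
  (rdiag m n a)^T *m P *m rdiag m n b
  = \matrix_(i < n, t < n) (a i * b t * nat_entry P i t).
Proof.
rewrite rdiag_tr_mul; apply/matrixP => i t; rewrite !mxE.
under eq_bigr => l _ do rewrite !mxE (fun_if (fun x => _ * x)) mulr0.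
rewrite -big_mkcond (big_ord1_eq _ (fun l => a i * nat_entry P i l * b l)).
case: ltnP => [_|le_mt]; first by rewrite mulrAC.
by rewrite nat_entry_out_col ?mulr0.
Qed.

Lemma mxtrace_rdiag (m n : nat) (a b : nat -> R) (P : 'M[R]_m) (Q : 'M[R]_n) :
  \tr ((rdiag m n a)^T *m P *m rdiag m n b *m Q) =
  \sum_(0 <= i < minn m n) \sum_(0 <= j < minn m n)
     a i * b j * (nat_entry P i j * nat_entry Q j i).
Proof.
rewrite rdiag_tr_mul_mul /mxtrace.
transitivity (\sum_(0 <= i < n) \sum_(0 <= j < n)
    a i * b j * (nat_entry P i j * nat_entry Q j i)).
  rewrite big_mkord; apply: eq_bigr => i _; rewrite mxE big_mkord.
  by apply: eq_bigr => j _; rewrite mxE -(nat_entry_ord Q) mulrA.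
rewrite (@sum_nat_minn _ m) => [|i le_mi]; last first.
  by rewrite big1 // => j _; rewrite nat_entry_out_row // mul0r mulr0.
apply: eq_bigr => i _; rewrite (@sum_nat_minn _ m) // => j le_mj.
by rewrite nat_entry_out_col // mul0r mulr0.
Qed.

Lemma frob_dot_svd (m n : nat) (U1 U2 : 'M[R]_m) (V1 V2 : 'M[R]_n) (a b : nat -> R) :
  frob_dot (U1 *m rdiag m n a *m V1^T) (U2 *m rdiag m n b *m V2^T) =
  \sum_(0 <= i < minn m n) \sum_(0 <= j < minn m n)
     a i * b j * (nat_entry (U1^T *m U2) i j * nat_entry (V2^T *m V1) j i).
Proof.
rewrite frob_dotE -mxtrace_rdiag !trmx_mul trmxK -!mulmxA.
by rewrite mxtrace_mulC !mulmxA.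
Qed.

Lemma frob_dot_svd_same (m n : nat) (U : 'M[R]_m) (V : 'M[R]_n) (a b : nat -> R) :
  Defs.orthomx U -> Defs.orthomx V ->
  frob_dot (U *m rdiag m n a *m V^T) (U *m rdiag m n b *m V^T) =
  \sum_(0 <= i < minn m n) a i * b i.
Proof.
move=> oU oV; rewrite frob_dot_svd oU oV; apply: eq_big_nat => i /andP[_ lt_ik].
rewrite -(sum_nat_delta (fun j => a i * b j) lt_ik).
apply: eq_big_nat => j /andP[_ lt_jk].
move: lt_ik lt_jk; rewrite !ltn_min => /andP[lt_im lt_in] /andP[lt_jm lt_jn].
rewrite !nat_entry1 // [i == j]eq_sym.
by case: eqP; rewrite ?mulr1 ?mulr0.
Qed.

Lemma frob2_svd (m n : nat) (U : 'M[R]_m) (V : 'M[R]_n) (a : nat -> R) :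
  Defs.orthomx U -> Defs.orthomx V ->
  frob2 (U *m rdiag m n a *m V^T) = \sum_(0 <= i < minn m n) a i ^+ 2.
Proof.
by move=> oU oV; rewrite frob2_dot frob_dot_svd_same //; under eq_bigr do rewrite -expr2.
Qed.

Section VonNeumann.
Variables (m n : nat) (U1 U2 : 'M[R]_m) (V1 V2 : 'M[R]_n) (a b : nat -> R).
Hypotheses (oU1 : Defs.orthomx U1) (oU2 : Defs.orthomx U2).
Hypotheses (oV1 : Defs.orthomx V1) (oV2 : Defs.orthomx V2).
Hypotheses (a_ge0 : nonneg_on (minn m n) a) (a_decr : nonincreasing_on (minn m n) a).
Hypotheses (b_ge0 : nonneg_on (minn m n) b) (b_decr : nonincreasing_on (minn m n) b).

Lemma frob_dot_svd_le :
  frob_dot (U1 *m rdiag m n a *m V1^T) (U2 *m rdiag m n b *m V2^T)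
  <= \sum_(0 <= i < minn m n) a i * b i.
Proof.
have oP := orthomx_trmx_mul oU1 oU2; have oQ := orthomx_trmx_mul oV2 oV1.
rewrite frob_dot_svd; apply: (rearrangement_le (w := fun i j =>
  nat_entry (U1^T *m U2) i j * nat_entry (V2^T *m V1) j i)) => //.
split=> [i | j]; rewrite ltn_min => /andP[lt_m lt_n]; apply: sum_abs_mul_le1.
- exact: orthomx_row_sqr_le (geq_minl m n).
- exact: orthomx_col_sqr_le (geq_minr m n).
- exact: orthomx_col_sqr_le (geq_minl m n).
- exact: orthomx_row_sqr_le (geq_minr m n).
Qed.

Lemma frob2_svdB_ge :
  \sum_(0 <= i < minn m n) (a i - b i) ^+ 2
  <= frob2 (U1 *m rdiag m n a *m V1^T - U2 *m rdiag m n b *m V2^T).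
Proof.
rewrite frob2B !frob2_svd //; have := frob_dot_svd_le.
have -> : \sum_(0 <= i < minn m n) (a i - b i) ^+ 2 =
    \sum_(0 <= i < minn m n) a i ^+ 2 + \sum_(0 <= i < minn m n) b i ^+ 2
    - 2 * \sum_(0 <= i < minn m n) a i * b i.
  by rewrite -big_split /= mulr_sumr -sumrB; apply: eq_bigr => i _; ring.
lra.
Qed.

Lemma svd_singvals_unique :
  U1 *m rdiag m n a *m V1^T = U2 *m rdiag m n b *m V2^T ->
  forall i, (i < minn m n)%N -> a i = b i.
Proof.
move=> eqM i lt_ik; have := frob2_svdB_ge; rewrite eqM subrr.
have -> : frob2 (0 : 'M[R]_(m, n)) = 0.
  by rewrite /frob2 big1 // => ? _; rewrite big1 // => ? _; rewrite mxE expr0n.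
move=> sum_le0; apply/eqP; rewrite -subr_eq0 -sqrf_eq0; apply/eqP.
have sum0 : \sum_(0 <= j < minn m n) (a j - b j) ^+ 2 = 0.
  by apply/le_anti; rewrite sum_le0 sumr_ge0 // => j _; apply: sqr_ge0.
rewrite big_mkord in sum0.
pose F (j : 'I_(minn m n)) := (a j - b j) ^+ 2.
exact: (@psumr_eq0P _ _ xpredT F (fun j _ => sqr_ge0 _) sum0 (Ordinal lt_ik)).
Qed.

End VonNeumann.

End SvdInnerProduct.

Section TruncatedSchattenProx.
Variable R : realType.

Lemma trunc_rank_le_minn (theta : R) (m n : nat) :
  0 <= theta -> theta <= 1 -> (trunc_rank theta m n <= minn m n)%N.
Proof.
move=> theta_ge0 theta_le1; rewrite /trunc_rank -lez_nat gez0_abs.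
  by rewrite ceil_le_int ler_piMl.
by rewrite ceil_ge0 (lt_le_trans (ltrN10 R)) ?mulr_ge0.
Qed.

Definition delta_term (lambda p s x : R) := lambda * powR x p + 2^-1 * (x - s) ^+ 2.

Lemma delta_objE (lambda p : R) (r k : nat) (sigma d : nat -> R) :
  delta_obj lambda p r k sigma d = \sum_(r <= i < k) delta_term lambda p (sigma i) (d i).
Proof. by []. Qed.

Lemma delta_term_lt (lambda p s x y : R) :
  0 < lambda -> 0 < p -> 0 <= s -> s <= x -> x < y ->
  delta_term lambda p s x < delta_term lambda p s y.
Proof.
move=> lambda_gt0 p_gt0 s_ge0 le_sx lt_xy.
have le_sy := le_trans le_sx (ltW lt_xy).
rewrite /delta_term ltr_leD ?ltr_pM2l ?gt0_ltr_powR ?nnegrE ?(le_trans s_ge0) //.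
by rewrite ler_pM2l ?invr_gt0 ?ltr0n // ler_sqr ?nnegrE ?subr_ge0 // lerD2r ltW.
Qed.

Lemma delta_opt_le_sigma (lambda p : R) (r k : nat) (sigma delta : nat -> R) :
  0 < lambda -> 0 < p -> nonneg_on k sigma -> nonincreasing_on k sigma ->
  delta_feasible r k delta ->
  (forall d, delta_feasible r k d ->
     delta_obj lambda p r k sigma delta <= delta_obj lambda p r k sigma d) ->
  (r < k)%N -> delta r <= sigma r.
Proof.
move=> lambda_gt0 p_gt0 sigma_ge0 sigma_decr [delta_ge0 delta_decr] delta_min lt_rk.
rewrite leNgt; apply/negP => lt_sigma_delta.
pose clipped i := Num.min (delta i) (sigma r).
have clipped_feas : delta_feasible r k clipped.
  split=> [i le_ri lt_ik | i j le_ri le_ij lt_jk]; rewrite /clipped.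
    by rewrite le_min delta_ge0 ?sigma_ge0.
  by rewrite le_min !ge_min lexx orbT delta_decr.
have clip_lt i : (r <= i)%N -> (i < k)%N -> sigma r < delta i ->
    delta_term lambda p (sigma i) (sigma r) < delta_term lambda p (sigma i) (delta i).
  by move=> le_ri lt_ik; apply: delta_term_lt; rewrite ?sigma_ge0 ?sigma_decr.
have := delta_min _ clipped_feas; apply/negP; rewrite -ltNge !delta_objE !(big_ltn lt_rk).
apply: ltr_leD; first by rewrite /clipped (min_r (ltW lt_sigma_delta)) clip_lt.
apply: ler_sum_nat => i /andP[lt_ri lt_ik]; rewrite /clipped.
have [//|lt_sigma_delta_i] := leP (delta i) (sigma r).
by apply/ltW/clip_lt => //; apply: ltnW.
Qed.

Lemma spliced_nonincreasing (r k : nat) (sigma delta : nat -> R) :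
  nonneg_on k sigma -> nonincreasing_on k sigma -> delta_feasible r k delta ->
  ((r < k)%N -> delta r <= sigma r) ->
  let spliced i := if (i < r)%N then sigma i else delta i in
  nonneg_on k spliced /\ nonincreasing_on k spliced.
Proof.
move=> sigma_ge0 sigma_decr [delta_ge0 delta_decr] delta_r_le spliced; split.
  move=> i lt_ik; rewrite /spliced.
  by case: ltnP => [_|le_ri]; [apply: sigma_ge0 | apply: delta_ge0].
move=> i j le_ij lt_jk; rewrite /spliced.
case: (ltnP j r) => [lt_jr|le_rj].
  by rewrite (leq_ltn_trans le_ij lt_jr) sigma_decr.
case: (ltnP i r) => [lt_ir|le_ri]; last exact: delta_decr.
have lt_rk := leq_ltn_trans le_rj lt_jk.
apply: le_trans (delta_decr _ _ (leqnn r) le_rj lt_jk) _.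
by apply: le_trans (delta_r_le lt_rk) _; apply: sigma_decr (ltnW lt_ir) lt_rk.
Qed.

Lemma singvals_delta_feasible (m n r : nat) (M : 'M[R]_(m, n)) (s : nat -> R) :
  is_singvals M s -> delta_feasible r (minn m n) s.
Proof.
by case=> [U [V [_ _ _ s_ge0 s_decr]]]; split=> *; [apply: s_ge0 | apply: s_decr].
Qed.

End TruncatedSchattenProx.

Section Objective.
Variables (R : realType) (theta p lambda : R) (m n : nat).
Variables (Y : 'M[R]_(m, n)) (U : 'M[R]_m) (V : 'M[R]_n) (sigma : nat -> R).
Hypothesis svdY : is_svd Y U sigma V.
Hypothesis le_rk : (trunc_rank theta m n <= minn m n)%N.
Local Notation r := (trunc_rank theta m n).

Lemma objective_ge_delta_obj (M : 'M[R]_(m, n)) (s : nat -> R) :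
  is_singvals M s ->
  delta_obj lambda p r (minn m n) sigma s <= objective theta p lambda Y M s.
Proof.
case: svdY => oU oV -> sigma_ge0 sigma_decr [U1 [V1 [oU1 oV1 -> s_ge0 s_decr]]].
rewrite /objective /trunc_schatten_pow /delta_obj big_split /= -!mulr_sumr.
rewrite lerD2l ler_pM2l ?invr_gt0 ?ltr0n //.
apply: le_trans (frob2_svdB_ge oU1 oU oV1 oV s_ge0 s_decr sigma_ge0 sigma_decr).
rewrite (big_cat_nat (leq0n r) le_rk) /= lerDr.
by apply: sumr_ge0 => i _; apply: sqr_ge0.
Qed.

Lemma objective_spliced (d s : nat -> R) :
  (forall i, (r <= i < minn m n)%N -> s i = d i) ->
  objective theta p lambda Y
    (U *m rdiag m n (fun i => if (i < r)%N then sigma i else d i) *m V^T) s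
  = delta_obj lambda p r (minn m n) sigma d.
Proof.
case: svdY => oU oV -> _ _ s_eq_d.
rewrite /objective /trunc_schatten_pow /delta_obj big_split /= -!mulr_sumr.
congr (_ * _ + _ * _); first by apply: eq_big_nat => i /s_eq_d ->.
rewrite -mulmxBl -mulmxBr rdiagB frob2_svd // (big_cat_nat (leq0n r) le_rk) /=.
rewrite big_nat_cond big1 ?add0r => [|i /andP[/andP[_ ->]] _]; last first.
  by rewrite subrr expr0n.
by apply: eq_big_nat => i /andP[le_ri _]; rewrite ltnNge le_ri.
Qed.

End Objective.

Theorem theorem1 (R : realType) (m n : nat) (theta p lambda : R)
    (Y : 'M[R]_(m, n)) (U : 'M[R]_m) (V : 'M[R]_n) (sigma delta : nat -> R) :
  (1 <= m)%N -> (1 <= n)%N ->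
  0 <= theta -> theta <= 1 ->
  0 < p -> p < 1 ->
  0 < lambda ->
  is_svd Y U sigma V ->
  delta_feasible (trunc_rank theta m n) (minn m n) delta ->
  (forall d : nat -> R, delta_feasible (trunc_rank theta m n) (minn m n) d ->
     delta_obj lambda p (trunc_rank theta m n) (minn m n) sigma delta
     <= delta_obj lambda p (trunc_rank theta m n) (minn m n) sigma d) ->
  let Delta := fun i => if (i < trunc_rank theta m n)%N then sigma i else delta i in
  let Mopt := U *m rdiag m n Delta *m V^T in
  forall (M : 'M[R]_(m, n)) (sM sopt : nat -> R),
    is_singvals M sM -> is_singvals Mopt sopt ->
    objective theta p lambda Y Mopt sopt <= objective theta p lambda Y M sM.
Proof.
move=> _ _ theta_ge0 theta_le1 p_gt0 _ lambda_gt0 svdY delta_feas delta_min.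
move=> Delta Mopt M sM sopt svM [Uo [Vo [oUo oVo eq_Mopt sopt_ge0 sopt_decr]]].
have le_rk := trunc_rank_le_minn m n theta_ge0 theta_le1.
have [oU oV _ sigma_ge0 sigma_decr] := svdY.
have [Delta_ge0 Delta_decr] := spliced_nonincreasing sigma_ge0 sigma_decr delta_feas
  (delta_opt_le_sigma lambda_gt0 p_gt0 sigma_ge0 sigma_decr delta_feas delta_min).
have sopt_eq : forall i, (i < minn m n)%N -> sopt i = Delta i.
  exact: svd_singvals_unique oUo oU oVo oV sopt_ge0 sopt_decr Delta_ge0 Delta_decr
    (esym eq_Mopt).
rewrite (objective_spliced p lambda svdY le_rk (d := delta)); last first.
  by move=> i /andP[le_ri lt_ik]; rewrite sopt_eq // /Delta ltnNge le_ri.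
exact: le_trans (delta_min sM (singvals_delta_feasible _ svM))
  (objective_ge_delta_obj p lambda svdY le_rk svM).
Qed.
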